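(* Let $u_*$ be the unique solution in $(0,1)$ of the equation $\ln\frac{1-u}{-\ln u}-1-\frac12\frac{(1+u)\ln u}{1-u}=0$. Then $$F(\delta,u):=u^\delta-\Big(\frac12-\delta\Big)-\Big(\frac12+\delta\Big)u\ge0$$ for all $\delta\in(0,\frac12)$ and all $u\in[u_*,1]$.
   Context: Numerically $u_*=0.00505778\ldots$. *)

From Stdlib Require Import Reals.
Open Scope R_scope.

Definition Gstar (u : R) : R :=
  ln ((1 - u) / (- ln u)) - 1 - (1/2) * ((1 + u) * ln u / (1 - u)).

Definition F (delta u : R) : R :=
  Rpower u delta - (1/2 - delta) - (1/2 + delta) * u.

From Stdlib Require Import Reals Lra Psatz.
Open Scope R_scope.

(* For fixed delta in [0,1], u |-> u^delta is concave, hence so is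
   u |-> F delta u; since F delta 1 = 0, it suffices to show F delta ustar >= 0.
   As a function of delta, ustar^delta = exp (delta ln ustar) is convex, and
   Gstar ustar = 0 says exactly that the line
   delta |-> (1/2 - delta) + (1/2 + delta) ustar is tangent to it, at the delta0
   where ustar^delta0 = (1 - ustar) / (- ln ustar); so the line lies below the
   curve. *)

Lemma ln_le_sub1 x : 0 < x -> ln x <= x - 1.
Proof.
  intros Hx.
  pose proof (exp_ineq1_le (ln x)) as H.
  rewrite exp_ln in H; lra.
Qed.

Lemma exp_le_compat a b : a <= b -> exp a <= exp b.
Proof.
  intros [Hlt | ->].
  - now left; apply exp_increasing.
  - lra.
Qed.

Lemma exp_ge_tangent x0 x : exp x0 * (1 + (x - x0)) <= exp x.
Proof.
  replace x with (x0 + (x - x0)) at 2 by ring.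
  rewrite exp_plus.
  apply Rmult_le_compat_l; [left; apply exp_pos | apply exp_ineq1_le].
Qed.

Lemma Rpower_1_l d : Rpower 1 d = 1.
Proof. unfold Rpower; now rewrite ln_1, Rmult_0_r, exp_0. Qed.

Lemma Rpower_le_Bernoulli z d :
  0 < z -> 0 <= d <= 1 -> Rpower z d <= 1 + d * (z - 1).
Proof.
  intros Hz Hd.
  set (a := 1 + d * (z - 1)).
  assert (Ha : 0 < a) by (unfold a; nra).
  assert (Hia : 0 < / a) by now apply Rinv_0_lt_compat.
  (* Weighted sum of [ln x <= x - 1] at [z / a] and [1 / a]: the right-hand
     sides add up to 0. *)
  assert (Hlog : d * ln z <= ln a).
  { pose proof (ln_le_sub1 (z * / a) (Rmult_lt_0_compat _ _ Hz Hia)) as Hza.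
    pose proof (ln_le_sub1 (/ a) Hia) as H1a.
    rewrite ln_mult, ln_Rinv in Hza by auto.
    rewrite ln_Rinv in H1a by auto.
    assert (Hsum : d * (z * / a - 1) + (1 - d) * (/ a - 1) = 0)
      by (unfold a in *; field; lra).
    nra. }
  unfold Rpower; rewrite <- (exp_ln a) by exact Ha.
  now apply exp_le_compat.
Qed.

Lemma Rpower_le_tangent m y d : 0 < m -> 0 < y -> 0 <= d <= 1 ->
  Rpower y d <= Rpower m d * (1 + d * (y / m - 1)).
Proof.
  intros Hm Hy Hd.
  assert (Hym : 0 < y / m) by now apply Rdiv_lt_0_compat.
  replace y with (m * (y / m)) at 1 by (field; lra).
  rewrite <- Rpower_mult_distr by auto.
  apply Rmult_le_compat_l; [left; apply exp_pos | now apply Rpower_le_Bernoulli].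
Qed.

Lemma Rpower_concave a b t d : 0 < a -> 0 < b -> 0 <= t <= 1 -> 0 <= d <= 1 ->
  t * Rpower a d + (1 - t) * Rpower b d <= Rpower (t * a + (1 - t) * b) d.
Proof.
  intros Ha Hb Ht Hd.
  set (m := t * a + (1 - t) * b).
  assert (Hm : 0 < m) by (unfold m; nra).
  pose proof (Rpower_le_tangent m a d Hm Ha Hd) as Hta.
  pose proof (Rpower_le_tangent m b d Hm Hb Hd) as Htb.
  assert (Hmix : t * (1 + d * (a / m - 1)) + (1 - t) * (1 + d * (b / m - 1)) = 1)
    by (unfold m in *; field; lra).
  apply Rmult_le_compat_l with (r := t) in Hta; [| lra].
  apply Rmult_le_compat_l with (r := 1 - t) in Htb; [| lra].
  assert (HP : t * (Rpower m d * (1 + d * (a / m - 1)))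
               + (1 - t) * (Rpower m d * (1 + d * (b / m - 1))) = Rpower m d).
  { transitivity (Rpower m d * (t * (1 + d * (a / m - 1))
                                + (1 - t) * (1 + d * (b / m - 1)))).
    - ring.
    - rewrite Hmix; ring. }
  lra.
Qed.

Lemma F_concave d a b t : 0 < a -> 0 < b -> 0 <= t <= 1 -> 0 <= d <= 1 ->
  t * F d a + (1 - t) * F d b <= F d (t * a + (1 - t) * b).
Proof.
  intros Ha Hb Ht Hd.
  pose proof (Rpower_concave a b t d Ha Hb Ht Hd).
  unfold F; nra.
Qed.

Lemma F_at_1 d : F d 1 = 0.
Proof. unfold F; rewrite Rpower_1_l; lra. Qed.

Lemma F_nonneg_at_Gstar_root s d : 0 < s < 1 -> Gstar s = 0 -> 0 <= F d s.
Proof.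
  intros Hs HG.
  set (L := ln s).
  assert (HL : L < 0) by (unfold L; rewrite <- ln_1; apply ln_increasing; lra).
  set (c := (1 - s) / (- L)).
  assert (Hc : 0 < c) by (unfold c; apply Rdiv_lt_0_compat; lra).
  assert (Hlnc : ln c = 1 + 1/2 * ((1 + s) * L / (1 - s)))
    by (unfold Gstar in HG; fold L c in HG; lra).
  set (d0 := ln c / L).
  assert (Hd0 : exp (d0 * L) = c).
  { unfold d0; replace (ln c / L * L) with (ln c) by (field; lra).
    now apply exp_ln. }
  assert (Htangent : c * (1 + (d * L - d0 * L)) = (1/2 - d) + (1/2 + d) * s)
    by (unfold d0; rewrite Hlnc; unfold c; field; lra).
  pose proof (exp_ge_tangent (d0 * L) (d * L)) as Hexp.
  rewrite Hd0, Htangent in Hexp.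
  unfold F, Rpower; fold L; lra.
Qed.

Theorem lemma3p5 (ustar : R) :
  0 < ustar < 1 ->
  Gstar ustar = 0 ->
  (forall v : R, 0 < v < 1 -> Gstar v = 0 -> v = ustar) ->
  forall delta u : R, 0 < delta < 1/2 -> ustar <= u <= 1 -> 0 <= F delta u.
Proof.
  intros Hs HG _ d u Hd Hu.
  set (t := (1 - u) / (1 - ustar)).
  assert (Ht : 0 <= t <= 1).
  { assert (Et : t * (1 - ustar) = 1 - u) by (unfold t; field; lra).
    split; nra. }
  assert (Hu_mix : t * ustar + (1 - t) * 1 = u) by (unfold t; field; lra).
  pose proof (F_concave d ustar 1 t ltac:(lra) ltac:(lra) Ht ltac:(lra)) as Hconc.
  rewrite Hu_mix, F_at_1 in Hconc.
  pose proof (F_nonneg_at_Gstar_root ustar d Hs HG).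
  nra.
Qed.
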